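(* Let $\breve{\mathcal{X}}_k\subset\mathbb{R}^n$ and $\mathcal{X}^{\rm F}_k\subset\mathbb{R}^n$ be constrained zonotopes and let $\check{\mathcal{X}}_k=\breve{\mathcal{X}}_k\cap_{I_n}\mathcal{X}^{\rm F}_k$. Let $g:\mathbb{R}^n\to\mathbb{R}^{m_c}$, let $\check{\mathcal{P}}_k\supseteq\check{\mathcal{X}}_k$ be a convex polytope, and suppose $g=g^{\rm a}-g^{\rm b}$ on $\check{\mathcal{P}}_k$ where $g^{\rm a},g^{\rm b}$ are differentiable and componentwise convex on $\check{\mathcal{P}}_k$. Let $\bar x\in\check{\mathcal{P}}_k$, $H=\nabla_xg(\bar x)$, and define $\bar g(x)=g(\bar x)+H(x-\bar x)$, $\bar g^{\rm a}(x)=g^{\rm a}(\bar x)+\nabla g^{\rm a}(\bar x)(x-\bar x)$, $\bar g^{\rm b}(x)=g^{\rm b}(\bar x)+\nabla g^{\rm b}(\bar x)(x-\bar x)$. For $i=1,\ldots,m_c$ let $$e^-_i=\min_{x\in\mathrm{vert}(\check{\mathcal{P}}_k)}\big(\bar g^{\rm a}_i(x)-g^{\rm b}_i(x)-\bar g_i(x)\big),\qquad e^+_i=\max_{x\in\mathrm{vert}(\check{\mathcal{P}}_k)}\big(g^{\rm a}_i(x)-\bar g^{\rm b}_i(x)-\bar g_i(x)\big),$$ and let $\mathcal{R}_k$ be the zonotope $\{\mathrm{diag}(\tfrac12(e^+-e^-)),\tfrac12(e^-+e^+)\}$ (the box $[e^-,e^+]$). Define $\mathcal{C}_k=\big(-g(\bar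 x)+H\bar x\big)\oplus(-\mathcal{R}_k)$. Then $$\{x\in\check{\mathcal{X}}_k:\ g(x)=0_{m_c\times1}\}\subseteq\tilde{\mathcal{X}}_k:=\check{\mathcal{X}}_k\cap_H\mathcal{C}_k,$$ and $\tilde{\mathcal{X}}_k$ is a constrained zonotope.
   Context: A constrained zonotope (CZ) is a set $\{G,c,A,b\}=\{G\xi+c:\xi\in[-1,1]^{n_g},\ A\xi=b\}$; a zonotope $\{G,c\}$ has no equality constraints. $\oplus$ is Minkowski sum (vectors treated as singletons), $-\mathcal{X}=\{-x:x\in\mathcal{X}\}$. The generalized intersection is $\mathcal{X}\cap_M\mathcal{W}=\{x\in\mathcal{X}:Mx\in\mathcal{W}\}$; $I_n$ is the $n\times n$ identity. $\mathrm{vert}(\mathcal{P})$ is the vertex set of the polytope $\mathcal{P}$. Vector-valued convexity is componentwise. *)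

(* Points of R^n are ROW vectors 'rV[R]_n, so that
   the library Jacobian 'J f p (with  'D_v f p = v *m 'J f p) can be used.
   Consequently a matrix M acting on x is written  x *m M  (the paper's M x). *)
From HB Require Import structures.
From mathcomp Require Import all_boot all_order all_algebra.
From mathcomp Require Import all_classical all_reals all_analysis.
Set Implicit Arguments. Unset Strict Implicit. Unset Printing Implicit Defensive.
Import Order.TTheory GRing.Theory Num.Theory.
Import numFieldNormedType.Exports.
Local Open Scope classical_set_scope.
Local Open Scope ring_scope.

Section Defs.
Variable R : realType.

Definition unit_box (ng : nat) (xi : 'rV[R]_ng) : Prop :=
  forall j : 'I_ng, -1 <= xi 0 j <= 1.

Definition cz_set (n ng nc : nat) (G : 'M[R]_(ng, n)) (c : 'rV[R]_n)
    (A : 'M[R]_(ng, nc)) (b : 'rV[R]_nc) : set 'rV[R]_n :=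
  [set x | exists xi : 'rV[R]_ng, unit_box xi /\ xi *m A = b /\ x = xi *m G + c].

Definition zono_set (n ng : nat) (G : 'M[R]_(ng, n)) (c : 'rV[R]_n) : set 'rV[R]_n :=
  [set x | exists xi : 'rV[R]_ng, unit_box xi /\ x = xi *m G + c].

Definition is_CZ (n : nat) (S : set 'rV[R]_n) : Prop :=
  exists (ng nc : nat) (G : 'M[R]_(ng, n)) (c : 'rV[R]_n)
         (A : 'M[R]_(ng, nc)) (b : 'rV[R]_nc), S = cz_set G c A b.

Definition msum_pt (n : nat) (p : 'rV[R]_n) (S : set 'rV[R]_n) : set 'rV[R]_n :=
  [set p + y | y in S].

Definition neg_set (n : nat) (S : set 'rV[R]_n) : set 'rV[R]_n :=
  [set - y | y in S].

Definition gen_int (n m : nat) (X : set 'rV[R]_n) (M : 'M[R]_(n, m))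
    (W : set 'rV[R]_m) : set 'rV[R]_n :=
  [set x | X x /\ W (x *m M)].

Definition conv_hull (n k : nat) (V : 'I_k -> 'rV[R]_n) : set 'rV[R]_n :=
  [set x | exists w : 'I_k -> R, (forall i, 0 <= w i) /\ \sum_(i < k) w i = 1
                                 /\ x = \sum_(i < k) w i *: V i].

Definition is_polytope (n : nat) (P : set 'rV[R]_n) : Prop :=
  exists (k : nat) (V : 'I_k -> 'rV[R]_n), P = conv_hull V.

Definition vert (n : nat) (P : set 'rV[R]_n) : set 'rV[R]_n :=
  [set x | P x /\ forall y z t, P y -> P z -> 0 < t < 1 ->
                  x = t *: y + (1 - t) *: z -> y = z].

Definition convex_on_cw (n m : nat) (S : set 'rV[R]_n) (f : 'rV[R]_n -> 'rV[R]_m) : Prop :=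
  forall (i : 'I_m) (x y : 'rV[R]_n) (t : R), S x -> S y -> 0 <= t <= 1 ->
    f (t *: x + (1 - t) *: y) 0 i <= t * f x 0 i + (1 - t) * f y 0 i.

Definition is_min_over (n : nat) (S : set 'rV[R]_n) (h : 'rV[R]_n -> R) (m : R) : Prop :=
  (exists v, S v /\ h v = m) /\ forall v, S v -> m <= h v.
Definition is_max_over (n : nat) (S : set 'rV[R]_n) (h : 'rV[R]_n -> R) (m : R) : Prop :=
  (exists v, S v /\ h v = m) /\ forall v, S v -> h v <= m.

Definition linz (n m : nat) (f : 'rV[R]_n -> 'rV[R]_m) (xbar x : 'rV[R]_n) : 'rV[R]_m :=
  f xbar + (x - xbar) *m 'J f xbar.

End Defs.

From HB Require Import structures.
From mathcomp Require Import all_boot all_order all_algebra.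
From mathcomp Require Import all_classical all_reals all_analysis.
From mathcomp Require Import ring lra.
Import Order.TTheory GRing.Theory Num.Theory.
Import numFieldNormedType.Exports.
Local Open Scope classical_set_scope.
Local Open Scope ring_scope.

(* For x in the constrained set with g x = 0, write L for the linearization of g
   at xbar.  Since x H = (- g xbar + xbar H) + L x, it suffices that - L x lies in
   the box [em, ep].  Convex differentiable functions lie above their tangent
   planes, so componentwise
     lin ga - gb - L  <=  ga - gb - L = - L  <=  ga - lin gb - L   at x.
   The outer functions are concave, resp. convex, on the polytope P, and every
   point of P is a convex combination of vertices of P, so they are bounded at x
   by their extreme values em, ep over the vertices.  The set is a constrained
   zonotope because generalized intersections of constrained zonotopes are
   constrained zonotopes and a point minus a zonotope is a zonotope. *)

(* Convexity with plain weights [t] in [0, 1], as in [conv_hull] and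
   [convex_on_cw], rather than the [{i01 R}] weights of convex.v. *)
Section ConvexCombination.
Context {R : numFieldType} {V : lmodType R}.
Implicit Types (S : set V) (h : V -> R).

Definition conv_closed S := forall y z (t : R), S y -> S z -> 0 <= t <= 1 ->
  S (t *: y + (1 - t) *: z).

Definition convex_fun_on S h := forall y z (t : R), S y -> S z -> 0 <= t <= 1 ->
  h (t *: y + (1 - t) *: z) <= t * h y + (1 - t) * h z.

Definition affine_fun h := forall y z (t : R),
  h (t *: y + (1 - t) *: z) = t * h y + (1 - t) * h z.

Lemma conv_closed_sum {S k} {U : 'I_k -> V} {w : 'I_k -> R} : conv_closed S ->
  (forall i, S (U i)) -> (forall i, 0 <= w i) -> \sum_i w i = 1 ->
  S (\sum_i w i *: U i).
Proof.
move=> cS; elim: k U w => [|k IH] U w SU w0.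
  by rewrite big_ord0 => /eqP; rewrite eq_sym oner_eq0.
rewrite !big_ord_recl => w1.
set s := \sum_(i < k) w (lift ord0 i) in w1.
have [s0 | s_neq0] := eqVneq s 0.
  have wz := psumr_eq0P (fun i _ => w0 (lift ord0 i)) s0.
  rewrite big1 ?addr0; last by move=> i _; rewrite wz // scale0r.
  have -> : w ord0 = 1 by rewrite -w1 s0 addr0.
  by rewrite scale1r.
have s_gt0 : 0 < s by rewrite lt_neqAle eq_sym s_neq0 sumr_ge0.
have ws1 : \sum_(i < k) w (lift ord0 i) / s = 1 by rewrite -mulr_suml mulfV.
have := IH (U \o lift ord0) (fun i => w (lift ord0 i) / s) (fun i => SU _)
  (fun i => divr_ge0 (w0 _) (ltW s_gt0)) ws1.
have -> : \sum_(i < k) w (lift ord0 i) *: U (lift ord0 i) =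
    (1 - w ord0) *: \sum_(i < k) (w (lift ord0 i) / s) *: U (lift ord0 i).
  rewrite scaler_sumr; apply: eq_bigr => i _; rewrite scalerA.
  by rewrite -w1 addrC addKr mulrCA mulfV // mulr1.
by move=> Sz; apply: cS (SU ord0) Sz _; rewrite w0 -w1 lerDl sumr_ge0.
Qed.

Lemma sum_weight1 {k} (U : 'I_k -> V) {w : 'I_k -> R} {j} :
  (forall i, 0 <= w i) -> \sum_i w i = 1 -> w j = 1 -> \sum_i w i *: U i = U j.
Proof.
move=> w0 w1 wj.
have : \sum_(i | i != j) w i = 0.
  by move: w1; rewrite (bigD1 j) //= wj -[RHS]addr0 => /addrI.
move=> /(psumr_eq0P (fun i _ => w0 i)) wz.
by rewrite (bigD1 j) //= wj scale1r big1 ?addr0 // => i /wz ->; rewrite scale0r.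
Qed.

Lemma conv_closed_sublevel {S h} M : conv_closed S -> convex_fun_on S h ->
  conv_closed [set z | S z /\ h z <= M].
Proof.
move=> cS ch y z t [Sy hy] [Sz hz] t01; split; first exact: cS.
apply: le_trans (ch _ _ _ Sy Sz t01) _.
case/andP: t01 => t0 t1.
have -> : M = t * M + (1 - t) * M by rewrite -mulrDl addrC subrK mul1r.
by rewrite lerD // ler_wpM2l ?subr_ge0.
Qed.

Lemma convex_fun_onD {S c a} : convex_fun_on S c -> affine_fun a ->
  convex_fun_on S (fun z => c z + a z).
Proof.
move=> cc aa y z t Sy Sz t01.
have -> : t * (c y + a y) + (1 - t) * (c z + a z) =
    (t * c y + (1 - t) * c z) + (t * a y + (1 - t) * a z) by ring.
by rewrite aa lerD2r; exact: cc.
Qed.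

Lemma convex_fun_onB {S c a} : convex_fun_on S c -> affine_fun a ->
  convex_fun_on S (fun z => c z - a z).
Proof.
move=> cc aa; apply: convex_fun_onD => // y z t.
by rewrite aa mulrN mulrN opprD.
Qed.

End ConvexCombination.

Section ConvexHull.
Context {R : realType} {n : nat}.
Implicit Types (P : set 'rV[R]_n) (h : 'rV[R]_n -> R).

Lemma conv_hull_conv_closed {k} (V : 'I_k -> 'rV[R]_n) : conv_closed (conv_hull V).
Proof.
move=> y z t [a [a0 [a1 ->]]] [b [b0 [b1 ->]]] /andP[t0 t1].
exists (fun i => t * a i + (1 - t) * b i); split.
  by move=> i; rewrite addr_ge0 // mulr_ge0 // subr_ge0.
split; first by rewrite big_split /= -!mulr_sumr a1 b1 !mulr1 addrC subrK.
rewrite !scaler_sumr -big_split /=; apply: eq_bigr => i _.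
by rewrite !scalerA scalerDl.
Qed.

Lemma conv_hull_gen {k} (V : 'I_k -> 'rV[R]_n) i : conv_hull V (V i).
Proof.
have w0 (l : 'I_k) : 0 <= (l == i)%:R :> R by rewrite ler0n.
have w1 : \sum_l (l == i)%:R = 1 :> R.
  by rewrite (bigD1 i) //= eqxx big1 ?addr0 // => l /negbTE ->.
have wi : (i == i)%:R = 1 :> R by rewrite eqxx.
by exists (fun l => (l == i)%:R); rewrite (sum_weight1 V w0 w1 wi).
Qed.

Lemma conv_hull_sub {k k'} {V : 'I_k -> 'rV[R]_n} {U : 'I_k' -> 'rV[R]_n} :
  (forall i, conv_hull U (V i)) -> conv_hull V `<=` conv_hull U.
Proof.
move=> VU x [w [w0 [w1 ->]]].
exact: conv_closed_sum (conv_hull_conv_closed U) VU w0 w1.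
Qed.

Lemma conv_hull_lift {k} {V : 'I_k.+1 -> 'rV[R]_n} {c : 'I_k.+1 -> R} {j} :
  (forall i, 0 <= c i) -> \sum_i c i = 1 -> c j < 1 -> V j = \sum_i c i *: V i ->
  conv_hull (V \o lift j) (V j).
Proof.
move=> c0 c1 cj1 Vj.
pose d := 1 - c j; have d_gt0 : 0 < d by rewrite subr_gt0.
have sum_d : \sum_(l < k) c (lift j l) = d.
  by move: c1; rewrite (bigD1_ord j) //= /d => <-; rewrite addrC addrK.
have dVj : \sum_(l < k) c (lift j l) *: V (lift j l) = d *: V j.
  by rewrite /d scalerBl scale1r {1}Vj (bigD1_ord j) //= addrC addrK.
exists (fun l => c (lift j l) / d); split.
  by move=> l; rewrite divr_ge0 // ltW.
split; first by rewrite -mulr_suml sum_d mulfV // gt_eqF.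
rewrite (eq_bigr (fun l => d^-1 *: (c (lift j l) *: V (lift j l)))); last first.
  by move=> l _; rewrite scalerA mulrC.
by rewrite -scaler_sumr dVj scalerA mulVf ?scale1r // gt_eqF.
Qed.

Lemma conv_hull_nonvert {k} {V : 'I_k.+1 -> 'rV[R]_n} {j} :
  ~ vert (conv_hull V) (V j) -> conv_hull (V \o lift j) (V j).
Proof.
move=> nvert.
have [y [z [t [[a [a0 [a1 ya]]] [[b [b0 [b1 zb]]] [t01 [Vj yz]]]]]]] :
    exists y z (t : R), conv_hull V y /\ conv_hull V z /\ 0 < t < 1 /\
      V j = t *: y + (1 - t) *: z /\ y <> z.
  apply: contrapT => H; apply: nvert; split; first exact: conv_hull_gen.
  move=> y z t Py Pz t01 E; apply: contrapT => yz; apply: H.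
  by exists y, z, t.
case/andP: t01 => t0 t1.
pose c i := t * a i + (1 - t) * b i.
have c0 i : 0 <= c i by rewrite addr_ge0 // mulr_ge0 // ltW // subr_gt0.
have c1 : \sum_i c i = 1.
  by rewrite big_split /= -!mulr_sumr a1 b1 !mulr1 addrC subrK.
apply: (conv_hull_lift c0 c1).
  have aj1 : a j <= 1 by rewrite -a1 (bigD1 j) //= lerDl sumr_ge0.
  have bj1 : b j <= 1 by rewrite -b1 (bigD1 j) //= lerDl sumr_ge0.
  rewrite ltNge; apply/negP => cj1; apply: yz.
  have aj : a j = 1 by apply/eqP; rewrite eq_le aj1 /=; rewrite /c in cj1; nra.
  have bj : b j = 1 by apply/eqP; rewrite eq_le bj1 /=; rewrite /c in cj1; nra.
  by rewrite ya zb (sum_weight1 V a0 a1 aj) (sum_weight1 V b0 b1 bj).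
rewrite Vj ya zb !scaler_sumr -big_split /=; apply: eq_bigr => i _.
by rewrite !scalerA scalerDl.
Qed.

Lemma conv_hull_vert {k} (V : 'I_k -> 'rV[R]_n) :
  exists k' (U : 'I_k' -> 'rV[R]_n),
    (forall i, vert (conv_hull V) (U i)) /\ conv_hull V `<=` conv_hull U.
Proof.
elim: k V => [|k IH] V; first by exists 0%N, V; split => [[]|].
have [all_vert|/existsNP [j nvert]] :=
  pselect (forall i, vert (conv_hull V) (V i)); first by exists k.+1, V; split.
have -> : conv_hull V = conv_hull (V \o lift j).
  apply/seteqP; split; apply: conv_hull_sub => i; last exact: conv_hull_gen.
  have [l ->|->] := unliftP j i; first exact: (conv_hull_gen (V \o lift j) l).
  exact: conv_hull_nonvert.
exact: IH.
Qed.

Lemma le_vert_polytope {P h} M : is_polytope P -> convex_fun_on P h ->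
  (forall v, vert P v -> h v <= M) -> forall x, P x -> h x <= M.
Proof.
move=> [k [V ->]] hcvx hvert x /[dup] Px.
have [k' [U [Uvert sub]]] := conv_hull_vert V.
move=> /sub [w [w0 [w1 ->]]].
have SU i : [set z | conv_hull V z /\ h z <= M] (U i).
  by split; [case: (Uvert i) | exact: hvert].
have sublevel_closed := conv_closed_sublevel M (conv_hull_conv_closed V) hcvx.
by have [] := conv_closed_sum sublevel_closed SU w0 w1.
Qed.

End ConvexHull.

Section Linearization.
Context {R : realType} {n m : nat}.
Implicit Types (f : 'rV[R]_n -> 'rV[R]_m) (P : set 'rV[R]_n).

Lemma affine_linz f xbar i : affine_fun (fun x => linz f xbar x 0 i).
Proof. by move=> y z t; rewrite /linz !mulmxBl mulmxDl -!scalemxAl !mxE; ring. Qed.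

Lemma linz_le_convex {f P xbar x} i : convex_on_cw P f -> P xbar -> P x ->
  differentiable f xbar -> linz f xbar x 0 i <= f x 0 i.
Proof.
move=> fcvx Pxbar Px df.
set v := x - xbar.
pose slope h := (h^-1 *: ((f \o shift xbar) (h *: v) - f xbar)) 0 i.
have slope_le h : 0 < h < 1 -> slope h <= f x 0 i - f xbar 0 i.
  case/andP=> h0 h1; rewrite /slope /= !mxE ler_pdivrMl //.
  have -> : h *: v + xbar = h *: x + (1 - h) *: xbar.
    by rewrite /v scalerBr scalerBl scale1r addrAC addrA.
  have := fcvx i x xbar h Px Pxbar; rewrite (ltW h0) (ltW h1) => /(_ isT).
  by rewrite mulrBr; lra.
have slope_cvg : slope h @[h --> 0^'+] --> ('D_v f xbar) 0 i.
  have pos_neq0 : [set u : R | 0 < u] `<=` [set u | u != 0].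
    by move=> u /gt_eqF/negbT.
  apply: cvg_trans (cvg_app _ (within_subset _ pos_neq0)) _.
  have quot_cvg : (fun h => h^-1 *: ((f \o shift xbar) (h *: v) - f xbar)) @ 0^'
      --> 'D_v f xbar := diff_derivable df.
  exact: (continuous_cvg _ (@coord_continuous R 1 m 0 i _)).
rewrite /linz mxE -(deriveEjacobian _ df) -lerBrDl.
apply: (cvgr_to_le slope_cvg); near=> h; apply: slope_le.
by apply/andP; split; near: h; [exact: nbhs_right_gt | exact: nbhs_right_lt].
Unshelve. all: by end_near. Qed.

End Linearization.

Section ConstrainedZonotope.
Context {R : realType}.

Lemma unit_box_row {n1 n2} (a : 'rV[R]_n1) (b : 'rV[R]_n2) :
  unit_box (row_mx a b) <-> unit_box a /\ unit_box b.
Proof.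
split=> [ab|[a1 b1] j]; first by split=> j;
  [have := ab (lshift n2 j); rewrite row_mxEl | have := ab (rshift n1 j); rewrite row_mxEr].
by rewrite -(splitK j); case: (fintype.split j) => j' /=; rewrite ?row_mxEl ?row_mxEr.
Qed.

(* The generators of the two sets are stacked, and [xi2 G2 + c2 = (xi1 G1 + c1) M]
   becomes the extra equality constraint. *)
Lemma is_CZ_gen_int {n m} (X : set 'rV[R]_n) (M : 'M[R]_(n, m)) W :
  is_CZ X -> is_CZ W -> is_CZ (gen_int X M W).
Proof.
move=> [n1 [k1 [G1 [c1 [A1 [b1 ->]]]]]] [n2 [k2 [G2 [c2 [A2 [b2 ->]]]]]].
exists (n1 + n2)%N, (k1 + k2 + m)%N, (col_mx G1 0), c1,
  (row_mx (row_mx (col_mx A1 0) (col_mx 0 A2)) (col_mx (G1 *m M) (- G2))),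
  (row_mx (row_mx b1 b2) (c2 - c1 *m M)).
apply/seteqP; split => x /=.
  move=> [[xi1 [u1 [e1 ->]]] [xi2 [u2 [e2 E]]]].
  exists (row_mx xi1 xi2); split; first exact/unit_box_row.
  rewrite !mul_mx_row !mul_row_col !mulmx0 addr0 add0r mulmxN mulmxA e1 e2.
  split; last by rewrite addr0.
  have -> : xi1 *m G1 *m M = xi2 *m G2 + c2 - c1 *m M by rewrite -E mulmxDl addrK.
  by rewrite addrAC [xi2 *m G2 + c2]addrC addrK.
move=> [xi [u [eA ->]]].
move: u eA; rewrite -[xi]hsubmxK; set xi1 := lsubmx xi; set xi2 := rsubmx xi.
move=> /unit_box_row [u1 u2].
rewrite !mul_mx_row !mul_row_col !mulmx0 addr0 add0r mulmxN mulmxA.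
move=> /eq_row_mx [/eq_row_mx [e1 e2] e3]; rewrite addr0.
split; first by exists xi1.
exists xi2; split => //; split => //.
have e4 : xi1 *m G1 *m M = c2 - c1 *m M + xi2 *m G2 by rewrite -e3 subrK.
by rewrite mulmxDl e4 addrAC subrK addrC.
Qed.

Lemma is_CZ_msum_pt_neg_zono {n ng} (G : 'M[R]_(ng, n)) c p :
  is_CZ (msum_pt p (neg_set (zono_set G c))).
Proof.
exists ng, 0%N, (- G), (p - c), 0, 0.
apply/seteqP; split => z /=.
  move=> [_ [_ [xi [u ->]] <-] <-].
  by exists xi; rewrite mulmx0 mulmxN opprD addrCA.
move=> [xi [u [_ ->]]].
exists (- (xi *m G + c)); first by exists (xi *m G + c) => //; exists xi.
by rewrite mulmxN opprD addrCA.
Qed.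

Lemma zono_box {m} (em ep y : 'rV[R]_m) : (forall j, em 0 j <= y 0 j <= ep 0 j) ->
  zono_set (diag_mx (2^-1 *: (ep - em))) (2^-1 *: (em + ep)) y.
Proof.
move=> y_in.
exists (\row_j (if ep 0 j - em 0 j == 0 then 0 else
   (y 0 j - 2^-1 * (em 0 j + ep 0 j)) / (2^-1 * (ep 0 j - em 0 j)))).
split=> [j|].
  have /andP [lo hi] := y_in j; rewrite mxE; case: ifP => [_|/negbT h]; first by lra.
  have d0 : 0 < 2^-1 * (ep 0 j - em 0 j).
    by rewrite mulr_gt0 ?invr_gt0 // lt_neqAle eq_sym h subr_ge0 (le_trans lo hi).
  by rewrite ler_pdivlMr // ler_pdivrMr //; apply/andP; split; lra.
apply/matrixP => i j; rewrite mul_mx_diag !mxE (ord1 i).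
have /andP [lo hi] := y_in j.
case: ifP => [/eqP h|/negbT h]; first by lra.
by rewrite divfK ?subrK // mulf_neq0 // invr_eq0.
Qed.

End ConstrainedZonotope.

Theorem corollary1 (R : realType) (n mc : nat)
  (Xbreve XF : set 'rV[R]_n)
  (g ga gb : 'rV[R]_n -> 'rV[R]_mc) (P : set 'rV[R]_n) (xbar : 'rV[R]_n)
  (em ep : 'rV[R]_mc) :
  is_CZ Xbreve -> is_CZ XF ->
  is_polytope P ->
  gen_int Xbreve 1%:M XF `<=` P ->
  (forall x, P x -> g x = ga x - gb x) ->
  (forall x, P x -> differentiable ga x) ->
  (forall x, P x -> differentiable gb x) ->
  convex_on_cw P ga -> convex_on_cw P gb ->
  P xbar ->
  (forall i : 'I_mc, is_min_over (vert P)
      (fun x => linz ga xbar x 0 i - gb x 0 i - linz g xbar x 0 i) (em 0 i)) ->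
  (forall i : 'I_mc, is_max_over (vert P)
      (fun x => ga x 0 i - linz gb xbar x 0 i - linz g xbar x 0 i) (ep 0 i)) ->
  let Xcheck := gen_int Xbreve 1%:M XF in
  let H := 'J g xbar in
  let Rk := zono_set (diag_mx (2^-1 *: (ep - em))) (2^-1 *: (em + ep)) in
  let Ck := msum_pt (- g xbar + xbar *m H) (neg_set Rk) in
  let Xtilde := gen_int Xcheck H Ck in
  [set x | Xcheck x /\ g x = 0] `<=` Xtilde /\ is_CZ Xtilde.
Proof.
move=> czXb czXF polyP subP g_split dga dgb cga cgb Pxbar em_min ep_max.
move=> Xcheck H Rk Ck Xtilde.
split; last by do 2?apply: is_CZ_gen_int => //; exact: is_CZ_msum_pt_neg_zono.
move=> x [Xx gx0]; split=> //.
have Px := subP x Xx.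
have lin_box j : em 0 j <= - linz g xbar x 0 j <= ep 0 j.
  have gab : ga x 0 j = gb x 0 j.
    apply/eqP; rewrite -subr_eq0.
    by have := g_split x Px; rewrite gx0 => /matrixP/(_ 0 j); rewrite !mxE => <-.
  have em_vert v : vert P v ->
      gb v 0 j - linz ga xbar v 0 j + linz g xbar v 0 j <= - em 0 j.
    by move=> /(em_min j).2; rewrite lerNr opprD opprB addrC.
  have lo := le_vert_polytope (- em 0 j) polyP
    (convex_fun_onD (convex_fun_onB (cgb j) (affine_linz ga xbar j)) (affine_linz g xbar j))
    em_vert x Px.
  have hi := le_vert_polytope (ep 0 j) polyP
    (convex_fun_onB (convex_fun_onB (cga j) (affine_linz gb xbar j)) (affine_linz g xbar j))
    (ep_max j).2 x Px.
  apply/andP; split.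
    rewrite lerNr; apply: le_trans lo; rewrite /= lerDr subr_ge0 -gab.
    exact: linz_le_convex j cga Pxbar Px (dga _ Pxbar).
  apply: le_trans hi; rewrite /= lerDr subr_ge0 gab.
  exact: linz_le_convex j cgb Pxbar Px (dgb _ Pxbar).
exists (linz g xbar x).
  by exists (- linz g xbar x); rewrite ?opprK //; apply: zono_box => j; rewrite mxE.
by rewrite /linz mulmxBl addrACA addNr add0r addrC subrK.
Qed.
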